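(* Let $G$ be an orderable group and let $U\subseteq G$ be a finite set of pairwise commensurable elements. Then $\langle U\rangle$ is a cyclic subgroup of $G$.
   Context: A group is orderable if it has a linear order $\le$ such that $g\le h$ implies $xgy\le xhy$ for all $g,h,x,y$. Two elements $g,h$ are commensurable if $g^x=h^y$ for some $x,y\in\mathbb{Z}\setminus\{0\}$. *)

From Stdlib Require Import ZArith List.
Open Scope Z_scope.

Record is_group {G : Type} (mul : G -> G -> G) (one : G) (inv : G -> G) : Prop :=
  { grp_assoc : forall a b c, mul a (mul b c) = mul (mul a b) c;
    grp_mul1g : forall a, mul one a = a;
    grp_mulg1 : forall a, mul a one = a;
    grp_mulVg : forall a, mul (inv a) a = one;
    grp_mulgV : forall a, mul a (inv a) = one }.

Definition zpow {G : Type} (mul : G -> G -> G) (one : G) (inv : G -> G)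
    (g : G) (n : Z) : G :=
  match n with
  | Z0 => one
  | Zpos p => Pos.iter (mul g) one p
  | Zneg p => Pos.iter (mul (inv g)) one p
  end.

Definition orderable {G : Type} (mul : G -> G -> G) : Prop :=
  exists le : G -> G -> Prop,
    (forall a, le a a) /\
    (forall a b, le a b -> le b a -> a = b) /\
    (forall a b c, le a b -> le b c -> le a c) /\
    (forall a b, le a b \/ le b a) /\
    (forall g h x y, le g h -> le (mul x (mul g y)) (mul x (mul h y))).

Definition commensurable {G : Type} (mul : G -> G -> G) (one : G) (inv : G -> G)
    (g h : G) : Prop :=
  exists x y : Z, x <> 0 /\ y <> 0 /\ zpow mul one inv g x = zpow mul one inv h y.

Inductive generated {G : Type} (mul : G -> G -> G) (one : G) (inv : G -> G)
    (U : G -> Prop) : G -> Prop :=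
  | gen_base : forall u, U u -> generated mul one inv U u
  | gen_one : generated mul one inv U one
  | gen_mul : forall a b, generated mul one inv U a -> generated mul one inv U b ->
              generated mul one inv U (mul a b)
  | gen_inv : forall a, generated mul one inv U a -> generated mul one inv U (inv a).

Definition cyclic_subgroup {G : Type} (mul : G -> G -> G) (one : G) (inv : G -> G)
    (H : G -> Prop) : Prop :=
  exists c : G, forall z, H z <-> exists n : Z, z = zpow mul one inv c n.

(* In an orderable group n-th roots are unique: if a < b then a^n < b^n for
   n > 0.  Hence a^m = b^n with n <> 0 forces a and b to commute (a b a^-1 and
   b have the same n-th power), and after dividing out g = gcd(m, n) we get
   a^m' = b^n' with p m' + q n' = 1, so that c = a^q b^p satisfies c^n' = a
   and c^m' = b.  Adding the elements of U one at a time then keeps <U>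
   generated by a single element. *)

From Stdlib Require Import ZArith List Lia.
Open Scope Z_scope.

Lemma Z_ind_succ_pred (P : Z -> Prop) :
  P 0 -> (forall n, P n -> P (n + 1)) -> (forall n, P n -> P (n - 1)) ->
  forall n, P n.
Proof. exact (Z.peano_ind P). Qed.

Section Group.
Variables (G : Type) (mul : G -> G -> G) (one : G) (inv : G -> G).
Hypothesis G_group : is_group mul one inv.

Local Infix "·" := mul (at level 40, left associativity).
Local Notation "x ^ n" := (zpow mul one inv x n).

Lemma mulgA a b c : a · (b · c) = a · b · c.
Proof. exact (grp_assoc _ _ _ G_group a b c). Qed.

Lemma mul1g a : one · a = a.
Proof. exact (grp_mul1g _ _ _ G_group a). Qed.

Lemma mulg1 a : a · one = a.
Proof. exact (grp_mulg1 _ _ _ G_group a). Qed.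

Lemma mulVg a : inv a · a = one.
Proof. exact (grp_mulVg _ _ _ G_group a). Qed.

Lemma mulgV a : a · inv a = one.
Proof. exact (grp_mulgV _ _ _ G_group a). Qed.

Lemma mulKg a b : inv a · (a · b) = b.
Proof. rewrite mulgA, mulVg, mul1g. reflexivity. Qed.

Lemma mulIg c a b : a · c = b · c -> a = b.
Proof.
  intro E. rewrite <- (mulg1 a), <- (mulg1 b), <- (mulgV c), !mulgA, E.
  reflexivity.
Qed.

Lemma invg_unique a b : a · b = one -> inv a = b.
Proof. intro E. rewrite <- (mulKg a b), E, mulg1. reflexivity. Qed.

Lemma invgK a : inv (inv a) = a.
Proof. apply invg_unique, mulVg. Qed.

Lemma invMg a b : inv (a · b) = inv b · inv a.
Proof.
  apply invg_unique. rewrite <- mulgA, (mulgA b), mulgV, mul1g, mulgV.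
  reflexivity.
Qed.

Lemma zpow0 x : x ^ 0 = one.
Proof. reflexivity. Qed.

Lemma zpowSl x n : x ^ (n + 1) = x · x ^ n.
Proof.
  destruct n as [|p|p].
  - reflexivity.
  - change (Z.pos p + 1) with (Z.succ (Z.pos p)).
    rewrite <- Pos2Z.inj_succ. apply Pos.iter_succ.
  - destruct (Pos.succ_pred_or p) as [-> | <-].
    + simpl. rewrite mulg1, mulgV. reflexivity.
    + replace (Z.neg (Pos.succ (Pos.pred p)) + 1) with (Z.neg (Pos.pred p)) by lia.
      simpl. rewrite Pos.iter_succ, mulgA, mulgV, mul1g. reflexivity.
Qed.

Lemma zpowPl x n : x ^ (n - 1) = inv x · x ^ n.
Proof.
  rewrite <- (Z.sub_add 1 n) at 2. rewrite zpowSl, mulKg. reflexivity.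
Qed.

Lemma zpow1 x : x ^ 1 = x.
Proof. exact (mulg1 x). Qed.

Lemma zpowD x m n : x ^ (m + n) = x ^ m · x ^ n.
Proof.
  induction m using Z_ind_succ_pred.
  - rewrite mul1g. reflexivity.
  - rewrite <- Z.add_assoc, (Z.add_comm 1), Z.add_assoc, !zpowSl, IHm, mulgA.
    reflexivity.
  - replace (m - 1 + n) with (m + n - 1) by lia.
    rewrite !zpowPl, IHm, mulgA. reflexivity.
Qed.

Lemma zpowN x n : x ^ (- n) = inv (x ^ n).
Proof.
  symmetry. apply invg_unique. rewrite <- zpowD, Z.add_opp_diag_r. reflexivity.
Qed.

Lemma zpowM x m n : x ^ (m * n) = (x ^ m) ^ n.
Proof.
  induction n using Z_ind_succ_pred.
  - rewrite Z.mul_0_r. reflexivity.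
  - replace (m * (n + 1)) with (m + m * n) by lia.
    rewrite zpowD, IHn, zpowSl. reflexivity.
  - replace (m * (n - 1)) with (- m + m * n) by lia.
    rewrite zpowD, IHn, zpowN, zpowPl. reflexivity.
Qed.

Lemma zpow1g n : one ^ n = one.
Proof. change (one ^ n) with ((one ^ 0) ^ n). rewrite <- zpowM. reflexivity. Qed.

Definition commute a b := a · b = b · a.

Lemma commute_sym a b : commute a b -> commute b a.
Proof. unfold commute. auto. Qed.

Lemma commuteM a b c : commute a b -> commute a c -> commute a (b · c).
Proof.
  unfold commute. intros Eb Ec. rewrite mulgA, Eb, <- mulgA, Ec, mulgA.
  reflexivity.
Qed.

Lemma commuteV a b : commute a b -> commute a (inv b).
Proof.
  unfold commute. intro E. apply (mulIg b).
  rewrite <- !mulgA, mulVg, mulg1, E, mulgA, mulVg, mul1g. reflexivity.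
Qed.

Lemma commute_zpow a b n : commute a b -> commute a (b ^ n).
Proof.
  intro E. induction n using Z_ind_succ_pred.
  - unfold commute. rewrite zpow0, mulg1, mul1g. reflexivity.
  - rewrite zpowSl. apply commuteM; assumption.
  - rewrite zpowPl. apply commuteM; [apply commuteV|]; assumption.
Qed.

Lemma zpowMn a b n : commute a b -> (a · b) ^ n = a ^ n · b ^ n.
Proof.
  intro E. induction n using Z_ind_succ_pred.
  - rewrite mulg1. reflexivity.
  - rewrite !zpowSl, IHn, <- !mulgA. f_equal. rewrite !mulgA. f_equal.
    apply commute_zpow, commute_sym, E.
  - rewrite (zpowPl (a · b)), (zpowPl b), IHn, invMg, mulgA, <- (mulgA (inv b)).
    rewrite <- zpowPl, mulgA. f_equal.
    apply commute_sym, commuteV, commute_sym, commute_zpow, commute_sym, E.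
Qed.

Lemma zpow_conj x y n : (x · y · inv x) ^ n = x · y ^ n · inv x.
Proof.
  induction n using Z_ind_succ_pred.
  - rewrite mulg1, mulgV. reflexivity.
  - rewrite !zpowSl, IHn, <- !mulgA, mulKg. reflexivity.
  - rewrite !zpowPl, IHn, !invMg, invgK, <- !mulgA, mulKg. reflexivity.
Qed.

Definition cycle c z := exists n, z = c ^ n.

Lemma cycle_zpow c x n : cycle c x -> cycle c (x ^ n).
Proof. intros [k ->]. exists (k * n). symmetry. apply zpowM. Qed.

Lemma generated_mono (P Q : G -> Prop) z :
  (forall x, P x -> Q x) -> generated mul one inv P z -> generated mul one inv Q z.
Proof.
  intros PQ Pz.
  induction Pz; [apply gen_base | apply gen_one | apply gen_mul | apply gen_inv]; auto.
Qed.

Lemma generated_zpow P x n :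
  generated mul one inv P x -> generated mul one inv P (x ^ n).
Proof.
  intro Px. induction n using Z_ind_succ_pred.
  - apply gen_one.
  - rewrite zpowSl. apply gen_mul; assumption.
  - rewrite zpowPl. apply gen_mul; [apply gen_inv|]; assumption.
Qed.

Lemma generated_eq_cycle (P : G -> Prop) c :
  (forall u, P u -> cycle c u) -> generated mul one inv P c ->
  forall z, generated mul one inv P z <-> cycle c z.
Proof.
  intros Pc Gc z. split.
  - intro Gz. induction Gz as [u Pu | | a b _ [i ->] _ [j ->] | a _ [i ->]].
    + exact (Pc u Pu).
    + exists 0. reflexivity.
    + exists (i + j). symmetry. apply zpowD.
    + exists (- i). symmetry. apply zpowN.
  - intros [n ->]. apply generated_zpow, Gc.
Qed.

Lemma zpow_coprime_root a b m n p q :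
  commute a b -> a ^ m = b ^ n -> p * m + q * n = 1 ->
  a = (a ^ q · b ^ p) ^ n /\ b = (a ^ q · b ^ p) ^ m.
Proof.
  intros Eab E Bez.
  assert (Eqp : commute (a ^ q) (b ^ p)).
  { apply commute_zpow, commute_sym, commute_zpow, commute_sym, Eab. }
  rewrite !zpowMn by exact Eqp. rewrite <- !zpowM. split.
  - rewrite (Z.mul_comm p n), (zpowM b n p), <- E, <- zpowM, <- zpowD.
    replace (q * n + m * p) with 1 by lia. symmetry. apply zpow1.
  - rewrite (Z.mul_comm q m), (zpowM a m q), E, <- zpowM, <- zpowD.
    replace (n * q + p * m) with 1 by lia. symmetry. apply zpow1.
Qed.

Section Orderable.
Variable le : G -> G -> Prop.
Hypotheses (le_refl : forall a, le a a)
           (le_anti : forall a b, le a b -> le b a -> a = b)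
           (le_trans : forall a b c, le a b -> le b c -> le a c)
           (le_total : forall a b, le a b \/ le b a)
           (le_mul : forall g h x y, le g h -> le (x · (g · y)) (x · (h · y))).

Lemma le_mul2l x a b : le a b -> le (x · a) (x · b).
Proof. intro ab. generalize (le_mul a b x one ab). rewrite !mulg1. auto. Qed.

Lemma le_mul2r x a b : le a b -> le (a · x) (b · x).
Proof. intro ab. generalize (le_mul a b one x ab). rewrite !mul1g. auto. Qed.

Lemma zpow_le_mono n a b : 0 <= n -> le a b -> le (a ^ n) (b ^ n).
Proof.
  intros n_ge0 ab. revert n n_ge0. apply natlike_ind; [apply le_refl |].
  intros n _ IH. change (Z.succ n) with (n + 1). rewrite !zpowSl.
  apply le_trans with (a · b ^ n); [apply le_mul2l | apply le_mul2r]; assumption.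
Qed.

(* [b · b^k = a · a^k <= a · b^k <= b · b^k] squeezes [a · b^k = b · b^k]. *)
Lemma zpow_inj_le n a b : 0 < n -> le a b -> a ^ n = b ^ n -> a = b.
Proof.
  intros n_gt0 ab E.
  replace n with ((n - 1) + 1) in E by lia. rewrite !zpowSl in E.
  apply (mulIg (b ^ (n - 1))), le_anti.
  - apply le_mul2r, ab.
  - rewrite <- E. apply le_mul2l, zpow_le_mono; [lia | exact ab].
Qed.

Lemma zpow_inj n a b : n <> 0 -> a ^ n = b ^ n -> a = b.
Proof.
  intros n_neq0 E.
  assert (Epos : forall k, 0 < k -> a ^ k = b ^ k -> a = b).
  { intros k k_gt0 Ek. destruct (le_total a b) as [ab | ba].
    - exact (zpow_inj_le k a b k_gt0 ab Ek).
    - symmetry. exact (zpow_inj_le k b a k_gt0 ba (eq_sym Ek)). }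
  destruct (Z_lt_le_dec 0 n); [now apply (Epos n) |].
  apply (Epos (- n)); [lia |]. rewrite !zpowN, E. reflexivity.
Qed.

Lemma zpow_eq1 n b : n <> 0 -> b ^ n = one -> b = one.
Proof. intros n_neq0 E. apply (zpow_inj n); [exact n_neq0 |]. rewrite zpow1g. exact E. Qed.

Lemma commute_of_zpow n x y : n <> 0 -> commute x (y ^ n) -> commute x y.
Proof.
  intros n_neq0 E.
  assert (Ey : x · y · inv x = y).
  { apply (zpow_inj n); [exact n_neq0 |].
    rewrite zpow_conj, E, <- mulgA, mulgV, mulg1. reflexivity. }
  unfold commute. rewrite <- Ey at 2. rewrite <- !mulgA, mulVg, mulg1. reflexivity.
Qed.

Lemma zpow_eq_common_root a b m n :
  a ^ m = b ^ n -> n <> 0 ->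
  exists c, cycle c a /\ cycle c b /\ exists p q, c = a ^ p · b ^ q.
Proof.
  intros E n_neq0.
  destruct (Z.eq_dec m 0) as [-> | m_neq0].
  { assert (b_one : b = one) by exact (zpow_eq1 n b n_neq0 (eq_sym E)).
    exists a. split; [|split].
    - exists 1. symmetry. apply zpow1.
    - exists 0. exact b_one.
    - exists 1, 0. rewrite zpow1, zpow0, mulg1. reflexivity. }
  assert (Eab : commute a b).
  { apply (commute_of_zpow n); [exact n_neq0 |].
    rewrite <- E. apply commute_zpow. reflexivity. }
  destruct (Z.gcd_divide_l m n) as [m' Em].
  destruct (Z.gcd_divide_r m n) as [n' En].
  destruct (Z.gcd_bezout m n _ eq_refl) as (p & q & Bez).
  set (g := Z.gcd m n) in *.
  assert (g_neq0 : g <> 0) by (intro g0; apply m_neq0, (Z.gcd_eq_0_l m n), g0).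
  assert (Bez' : p * m' + q * n' = 1).
  { apply (Z.mul_reg_r _ _ g g_neq0). rewrite Em, En in Bez. lia. }
  assert (E' : a ^ m' = b ^ n').
  { apply (zpow_inj g); [exact g_neq0 |]. rewrite <- !zpowM, <- Em, <- En. exact E. }
  destruct (zpow_coprime_root a b m' n' p q Eab E' Bez') as [Ea Eb].
  exists (a ^ q · b ^ p). split; [|split].
  - exists n'. exact Ea.
  - exists m'. exact Eb.
  - exists q, p. reflexivity.
Qed.

Lemma generated_list_cyclic (U : list G) :
  (forall g h, In g U -> In h U -> commensurable mul one inv g h) ->
  exists c, (forall u, In u U -> cycle c u) /\ generated mul one inv (fun u => In u U) c.
Proof.
  induction U as [| u [| u' U] IH]; intro HU.
  - exists one. split; [intros u [] | apply gen_one].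
  - exists u. split.
    + intros v [<- | []]. exists 1. symmetry. apply zpow1.
    + apply gen_base. left. reflexivity.
  - destruct IH as (c & Uc & Gc); [intros g h Hg Hh; apply HU; right; assumption |].
    destruct (Uc u' (or_introl eq_refl)) as [k ->].
    destruct (HU (c ^ k) u) as (x & y & _ & y_neq0 & Exy);
      [right; left; reflexivity | left; reflexivity |].
    rewrite <- zpowM in Exy.
    destruct (zpow_eq_common_root c u (k * x) y Exy y_neq0)
      as (c' & c'c & c'u & p & q & Ec').
    exists c'. split.
    + intros v [<- | Hv]; [exact c'u |].
      destruct c'c as [i ->]. destruct (Uc v Hv) as [j ->].
      apply cycle_zpow. exists i. reflexivity.
    + rewrite Ec'. apply gen_mul; apply generated_zpow.
      * apply (generated_mono _ _ _ (fun v Hv => or_intror Hv) Gc).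
      * apply gen_base. left. reflexivity.
Qed.

End Orderable.
End Group.

Theorem mainTheorem17 (G : Type) (mul : G -> G -> G) (one : G) (inv : G -> G)
  (Hgrp : is_group mul one inv) (Hord : orderable mul) (U : list G)
  (Hcomm : forall g h, In g U -> In h U -> commensurable mul one inv g h) :
  cyclic_subgroup mul one inv (generated mul one inv (fun u => In u U)).
Proof.
  destruct Hord as (le & le_refl & le_anti & le_trans & le_total & le_mul).
  destruct (generated_list_cyclic G mul one inv Hgrp le le_refl le_anti le_trans
              le_total le_mul U Hcomm) as (c & Uc & Gc).
  exists c. exact (generated_eq_cycle G mul one inv Hgrp _ c Uc Gc).
Qed.
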